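(* Let $\mathcal{C}=\{(a_i,b_i,y_i)\}_{i=1}^{|\mathcal{C}|}$ be a set of constraints, $\omega>0$, and let embeddings $\boldsymbol{z}_j\in\mathbb{R}^D\setminus\{\mathbf 0\}$ satisfy $\mathcal{L}_{\mathrm{ang}}\le\varepsilon$ for some $\varepsilon>0$. Then: (i) for each positive constraint $(a_i,b_i,1)\in\mathcal{C}$, $0\le\theta_{\boldsymbol{z}_{a_i},\boldsymbol{z}_{b_i}}\le\Delta^+(\varepsilon):=\arccos\big(2e^{-|\mathcal{C}|\varepsilon}-1\big)$, and $\Delta^+(\varepsilon)\approx 2\sqrt{|\mathcal{C}|\varepsilon}$ as $\varepsilon\to0$; (ii) for each negative constraint $(a_i,b_i,0)\in\mathcal{C}$ with $\theta_{\boldsymbol{z}_{a_i},\boldsymbol{z}_{b_i}}\le\pi/\omega$, $0\le\frac{\pi}{\omega}-\theta_{\boldsymbol{z}_{a_i},\boldsymbol{z}_{b_i}}\le\Delta^-(\varepsilon):=\frac{1}{\omega}\arccos\big(2e^{-|\mathcal{C}|\varepsilon}-1\big)$, and $\Delta^-(\varepsilon)\approx 2\sqrt{|\mathcal{C}|\varepsilon}/\omega$ as $\varepsilon\to0$ (here $\approx$ means the ratio tends to $1$).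
   Context: For nonzero vectors, $\theta_{\boldsymbol{u},\boldsymbol{v}}\in[0,\pi]$ is the angle. The loss is $\mathcal{L}_{\mathrm{ang}}=-\frac{1}{|\mathcal{C}|}\sum_{i}\big(y_i\log \mathrm{Sim}(a_i,b_i)+(1-y_i)\log(1-\mathrm{Sim}(a_i,b_i))\big)$, with $\mathrm{Sim}(a_i,b_i)=\tfrac12(\cos\theta_{\boldsymbol{z}_{a_i},\boldsymbol{z}_{b_i}}+1)$ if $y_i=1$ and $\mathrm{Sim}(a_i,b_i)=\tfrac12(\cos(\min(\omega\theta_{\boldsymbol{z}_{a_i},\boldsymbol{z}_{b_i}},\pi))+1)$ if $y_i=0$. *)

From HB Require Import structures.
From mathcomp Require Import all_boot all_order all_algebra.
From mathcomp Require Import all_classical all_reals all_analysis.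
Set Implicit Arguments. Unset Strict Implicit. Unset Printing Implicit Defensive.
Import Order.TTheory GRing.Theory Num.Theory.
Import numFieldNormedType.Exports.
Local Open Scope ring_scope.

Section AngDefs.
Context {R : realType}.

Definition dotv (D : nat) (u v : 'rV[R]_D) : R := \sum_(k < D) u 0 k * v 0 k.
Definition normv (D : nat) (u : 'rV[R]_D) : R := Num.sqrt (dotv u u).

Definition angle (D : nat) (u v : 'rV[R]_D) : R :=
  acos (dotv u v / (normv u * normv v)).

Definition Sim (D : nat) (omega : R) (u v : 'rV[R]_D) (y : bool) : R :=
  if y then (cos (angle u v) + 1) / 2
  else (cos (Num.min (omega * angle u v) pi) + 1) / 2.

(* logarithm with log 0 = -oo (so that an infinite loss is really infinite) *)
Definition elog (x : R) : \bar R := if 0 < x then (ln x)%:E else -oo%E.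

(* the angular loss L_ang, extended-real valued;
   constraints indexed by 'I_M (|C| = M), embeddings indexed by 'I_N *)
Definition L_ang (D N M : nat) (omega : R) (z : 'I_N -> 'rV[R]_D)
  (a b : 'I_M -> 'I_N) (y : 'I_M -> bool) : \bar R :=
  (- ((M%:R)^-1)%:E *
   \sum_(i < M) (((y i)%:R)%:E * elog (Sim omega (z (a i)) (z (b i)) (y i))
                 + ((1 - (y i)%:R))%:E * elog (1 - Sim omega (z (a i)) (z (b i)) (y i))))%E.

Definition Delta_plus (M : nat) (eps : R) : R :=
  acos (2 * expR (- (M%:R * eps)) - 1).

Definition Delta_minus (omega : R) (M : nat) (eps : R) : R :=
  omega^-1 * acos (2 * expR (- (M%:R * eps)) - 1).

End AngDefs.

(* Every term of the cross-entropy is nonnegative, so L_ang <= eps forces the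
   probability assigned to each observed label to be at least e^(-|C| eps).
   Since cos is decreasing on [0, pi], this bounds theta (positive constraints)
   and pi - omega theta (negative ones, as cos (pi - x) = - cos x) by
   acos (2 e^(-t) - 1), t = |C| eps.  For the asymptotics put
   h = acos (2 e^(-t) - 1) / 2, so that cos^2 h = e^(-t): from
   h cos h <= sin h <= h and 1 - t <= e^(-t) <= 1 / (1 + t) one gets
   sqrt t / (1 + t) <= h <= sqrt t / (1 - t), and the ratio to sqrt t is
   squeezed to 1. *)

From HB Require Import structures.
From mathcomp Require Import all_boot all_order all_algebra.
From mathcomp Require Import all_classical all_reals all_analysis.
From mathcomp Require Import ring lra.
Set Implicit Arguments. Unset Strict Implicit. Unset Printing Implicit Defensive.
Import Order.TTheory GRing.Theory Num.Theory.
Import numFieldNormedType.Exports.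
Local Open Scope classical_set_scope.
Local Open Scope ring_scope.

Section CauchySchwarz.
Context {R : realFieldType}.

Lemma cauchy_schwarz_sum (I : finType) (u v : I -> R) :
  (\sum_i u i * v i) ^+ 2 <= (\sum_i u i ^+ 2) * (\sum_i v i ^+ 2).
Proof.
have lagrange : \sum_j \sum_k (u j * v k - u k * v j) ^+ 2 =
    2 * ((\sum_i u i ^+ 2) * (\sum_i v i ^+ 2) - (\sum_i u i * v i) ^+ 2).
  transitivity (\sum_j \sum_k (u j ^+ 2 * v k ^+ 2 + u k ^+ 2 * v j ^+ 2
                              - 2 * ((u j * v j) * (u k * v k)))).
    by apply: eq_bigr => j _; apply: eq_bigr => k _; ring.
  under eq_bigr do rewrite sumrB big_split /=.
  rewrite sumrB big_split /= [X in _ + X - _]exchange_big -!big_distrlr /=.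
  have cross : \sum_j \sum_k 2 * ((u j * v j) * (u k * v k)) =
      2 * (\sum_i u i * v i) ^+ 2.
    rewrite expr2 big_distrlr mulr_sumr; apply: eq_bigr => j _.
    by rewrite mulr_sumr.
  by rewrite cross; ring.
have : 0 <= \sum_j \sum_k (u j * v k - u k * v j) ^+ 2.
  by apply: sumr_ge0 => j _; apply: sumr_ge0 => k _; apply: sqr_ge0.
rewrite lagrange; lra.
Qed.

End CauchySchwarz.

Section Trigonometry.
Context {R : realType}.

Lemma ge0_is_derive_le (f df : R -> R) (x : R) : 0 <= x ->
  (forall t : R, is_derive t 1 f (df t)) -> (forall t, 0 <= t <= x -> 0 <= df t) ->
  f 0 <= f x.
Proof.
move=> x0 f_df df_ge0.
have f_cont : {within `[0, x], continuous f}.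
  by apply: derivable_within_continuous => t _; apply: ex_derive.
have [c] := MVT_segment x0 (fun t _ => f_df t) f_cont.
rewrite in_itv /= => c_itv /eqP; rewrite subr_eq => /eqP->.
by rewrite lerDr mulr_ge0 ?df_ge0 // subr0.
Qed.

Lemma sin_le_id (x : R) : 0 <= x -> sin x <= x.
Proof.
move=> x0.
have := @ge0_is_derive_le (fun t => t - sin t) (fun t => 1 - cos t) x x0.
by rewrite sin0 subrr subr_ge0; apply=> t _; rewrite subr_ge0 cos_le1.
Qed.

Lemma mulr_cos_le_sin (x : R) : 0 <= x <= pi -> x * cos x <= sin x.
Proof.
move=> /andP[x0 xpi].
have := @ge0_is_derive_le (fun t => sin t - t * cos t) (fun t => t * sin t) x x0.
rewrite sin0 mul0r subrr subr_ge0; apply=> [t|t /andP[t0 tx]].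
- have := is_deriveB (is_derive_sin t) (is_deriveM (is_derive_id t 1) (is_derive_cos t)).
  by move/is_derive_eq; apply; rewrite scaler1 opprD addrCA subrr addr0 scalerN opprK.
- by rewrite mulr_ge0 // sin_ge0_pi // t0 (le_trans tx xpi).
Qed.

Lemma expRN_itv (t : R) : 0 <= t -> 0 <= expR (- t) <= 1.
Proof. by move=> t_ge0; rewrite expR_ge0 expR_le1 oppr_le0. Qed.

Lemma double_sub1_itv (e : R) : 0 <= e <= 1 -> -1 <= 2 * e - 1 <= 1.
Proof. by move=> /andP[e0 e1]; apply/andP; split; lra. Qed.

Lemma le_acos (c t : R) : -1 <= c <= 1 -> 0 <= t <= pi -> c <= cos t -> t <= acos c.
Proof.
move=> c_itv t_itv c_le; have [acos_itv cos_acos] := acos_def c_itv.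
rewrite leNgt; apply/negP => lt_acos.
have : cos t < cos (acos c) by rewrite ltr_cos // in_itv /=.
by rewrite cos_acos ltNge c_le.
Qed.

End Trigonometry.

Section Angle.
Context {R : realType} {D : nat}.
Implicit Types u v : 'rV[R]_D.

Lemma dotvv_ge0 u : 0 <= dotv u u.
Proof. by apply: sumr_ge0 => k _; rewrite -expr2 sqr_ge0. Qed.

Lemma dotv_sqr_le u v : dotv u v ^+ 2 <= dotv u u * dotv v v.
Proof.
have dotvvE w : dotv w w = \sum_k w 0 k ^+ 2 by apply: eq_bigr => k _; rewrite expr2.
by rewrite !dotvvE; apply: cauchy_schwarz_sum.
Qed.

Lemma dotv_normv_itv u v : -1 <= dotv u v / (normv u * normv v) <= 1.
Proof.
rewrite -ler_norml /normv -sqrtrM ?dotvv_ge0 //.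
have [->|p_neq0] := eqVneq (dotv u u * dotv v v) 0.
  by rewrite sqrtr0 invr0 mulr0 normr0.
have p_gt0 : 0 < dotv u u * dotv v v by rewrite lt_def p_neq0 mulr_ge0 ?dotvv_ge0.
rewrite normrM normfV (ger0_norm (sqrtr_ge0 _)) ler_pdivrMr ?sqrtr_gt0 // mul1r.
by rewrite -sqrtr_sqr ler_sqrt ?dotv_sqr_le // ltW.
Qed.

Lemma angle_itv u v : 0 <= angle u v <= pi.
Proof. by have [] := acos_def (dotv_normv_itv u v). Qed.

End Angle.

Section Loss.
Context {R : realType}.

Lemma elog_le0 (x : R) : x <= 1 -> (elog x <= 0)%E.
Proof. by rewrite /elog; case: ifP => // _ x1; rewrite lee_fin ln_le0. Qed.

Lemma expRN_le_of_elog (x r : R) : (- elog x <= r%:E)%E -> expR (- r) <= x.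
Proof.
rewrite /elog; case: ifP => [x_gt0|_]; last by rewrite leNgt ltey.
by rewrite -EFinN lee_fin lerNl -{2}(lnK x_gt0) ler_expR.
Qed.

Lemma sume_npos_le (I : finType) (F : I -> \bar R) (i : I) :
  (forall j, F j <= 0)%E -> (\sum_j F j <= F i)%E.
Proof.
move=> F_le0; rewrite (bigD1 i) //= -[leRHS]adde0 leeD2l //.
by apply: sume_le0 => j _; apply: F_le0.
Qed.

Variables (D N M : nat) (omega : R) (z : 'I_N -> 'rV[R]_D).
Variables (a b : 'I_M -> 'I_N) (y : 'I_M -> bool).

Definition label_prob (i : 'I_M) : R :=
  if y i then Sim omega (z (a i)) (z (b i)) true
  else 1 - Sim omega (z (a i)) (z (b i)) false.

Lemma label_prob_le1 i : label_prob i <= 1.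
Proof.
rewrite /label_prob /Sim; case: (y i).
- by have := cos_le1 (angle (z (a i)) (z (b i))); lra.
- by have := cos_geN1 (Num.min (omega * angle (z (a i)) (z (b i))) pi); lra.
Qed.

Lemma L_angE :
  L_ang omega z a b y = (- (M%:R^-1)%:E * \sum_i elog (label_prob i))%E.
Proof.
rewrite /L_ang; congr (_ * _)%E; apply: eq_bigr => i _.
by rewrite /label_prob; case: (y i); rewrite /= ?subrr ?subr0 mul0e ?adde0 ?add0e mul1e.
Qed.

Lemma expR_le_label_prob (eps : R) : (0 < M)%N ->
  (L_ang omega z a b y <= eps%:E)%E -> forall i, expR (- (M%:R * eps)) <= label_prob i.
Proof.
move=> M_gt0 L_le i; apply: expRN_le_of_elog.
have label_elog_le0 j : (elog (label_prob j) <= 0)%E by apply/elog_le0/label_prob_le1.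
move: L_le; rewrite L_angE mulNe -muleN lee_pdivrMl ?ltr0n // EFinM.
by apply: le_trans; rewrite leeN2 sume_npos_le.
Qed.

End Loss.

Section AngleBounds.
Context {R : realType} {D : nat}.
Variables (omega e : R).
Hypothesis e_itv : 0 <= e <= 1.
Implicit Types u v : 'rV[R]_D.

Let acos_arg_itv : -1 <= 2 * e - 1 <= 1 := double_sub1_itv e_itv.

Lemma angle_le_acos u v : e <= Sim omega u v true -> angle u v <= acos (2 * e - 1).
Proof.
rewrite /Sim => e_le; apply: le_acos => //; first exact: angle_itv.
lra.
Qed.

Lemma pi_div_sub_angle_le_acos u v : 0 < omega -> angle u v <= pi / omega ->
  e <= 1 - Sim omega u v false -> pi / omega - angle u v <= omega^-1 * acos (2 * e - 1).
Proof.
move=> omega_gt0 angle_le; rewrite /Sim.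
have /andP[angle_ge0 _] := angle_itv u v.
have wangle_le : omega * angle u v <= pi by rewrite mulrC -ler_pdivlMr.
rewrite min_l // => e_le.
have cos_compl : cos (pi - omega * angle u v) = - cos (omega * angle u v).
  by rewrite cosB cospi sinpi mul0r addr0 mulN1r.
have : pi - omega * angle u v <= acos (2 * e - 1).
  apply: le_acos => //; last by rewrite cos_compl; lra.
  by rewrite subr_ge0 wangle_le gerBl mulr_ge0 // ltW.
rewrite -(@ler_pM2l _ omega^-1) ?invr_gt0 //; apply: le_trans.
by rewrite mulrBr mulKf ?gt_eqF // mulrC.
Qed.

End AngleBounds.

Section Asymptotics.
Context {R : realType}.

Lemma half_acos_itv (e : R) : 0 <= e <= 1 -> 0 <= acos (2 * e - 1) / 2 <= pi / 2.
Proof.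
move=> /double_sub1_itv c_itv; have [/andP[c0 cpi] _] := acos_def c_itv.
by rewrite divr_ge0 // ler_pM2r.
Qed.

Lemma cos_half_acos_sqr (e : R) : 0 <= e <= 1 -> cos (acos (2 * e - 1) / 2) ^+ 2 = e.
Proof.
move=> /double_sub1_itv/acos_def[_ cos_acos].
have : cos ((acos (2 * e - 1) / 2) *+ 2) = 2 * e - 1.
  by rewrite -mulr_natr mulfVK ?pnatr_eq0.
rewrite cos_mulr2n mulr2n; lra.
Qed.

Lemma sqrt_div_le_half_acos (t : R) : 0 < t ->
  Num.sqrt t / (1 + t) <= acos (2 * expR (- t) - 1) / 2.
Proof.
move=> t_gt0; set e := expR (- t).
have e_itv : 0 <= e <= 1 by rewrite expRN_itv // ltW.
have e_le : e * (1 + t) <= 1.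
  by rewrite /e expRN mulrC ler_pdivrMr ?expR_gt0 // mul1r expR_ge1Dx.
have /andP[h_ge0 h_le] := half_acos_itv e_itv.
set h := acos _ / 2 in h_ge0 h_le *.
have sin_h_ge0 : 0 <= sin h by apply: sin_ge0_pi; have := pi_ge0 R; lra.
apply: le_trans _ (sin_le_id h_ge0).
have Dt_gt0 : 0 < 1 + t by lra.
rewrite -ler_sqr ?nnegrE ?divr_ge0 ?sqrtr_ge0 ?(ltW Dt_gt0) //.
rewrite sin2cos2 cos_half_acos_sqr // expr_div_n (sqr_sqrtr (ltW t_gt0)).
by rewrite ler_pdivrMr ?exprn_gt0 //; nra.
Qed.

Lemma half_acos_le_sqrt_div (t : R) : 0 < t < 1 ->
  acos (2 * expR (- t) - 1) / 2 <= Num.sqrt t / (1 - t).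
Proof.
move=> /andP[t_gt0 t_lt1]; set e := expR (- t).
have e_itv : 0 <= e <= 1 by rewrite expRN_itv // ltW.
have e_ge : 1 - t <= e by exact: expR_ge1Dx.
have /andP[h_ge0 h_le] := half_acos_itv e_itv.
set h := acos _ / 2 in h_ge0 h_le *.
have h_le_pi : h <= pi by have := pi_ge0 R; lra.
have sin_h_le : sin h <= Num.sqrt t.
  rewrite -ler_sqr ?nnegrE ?sqrtr_ge0 ?sin_ge0_pi ?h_ge0 //.
  by rewrite sin2cos2 cos_half_acos_sqr // (sqr_sqrtr (ltW t_gt0)); lra.
have cos_h_ge : 1 - t <= cos h.
  rewrite -ler_sqr ?nnegrE ?cos_ge0_pihalf ?subr_ge0 ?(ltW t_lt1) //; last first.
    by have := pi_ge0 R; lra.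
  by rewrite cos_half_acos_sqr //; nra.
rewrite ler_pdivlMr ?subr_gt0 //.
apply: le_trans sin_h_le; apply: le_trans (mulr_cos_le_sin _); last by rewrite h_ge0.
by rewrite ler_wpM2l.
Qed.

Lemma acos_expR_ratio_itv (t : R) : 0 < t < 1 ->
  (1 + t)^-1 <= acos (2 * expR (- t) - 1) / (2 * Num.sqrt t) <= (1 - t)^-1.
Proof.
move=> t_itv; have /andP[t_gt0 t_lt1] := t_itv.
have s_gt0 : 0 < Num.sqrt t by rewrite sqrtr_gt0.
rewrite invfM mulrA ler_pdivlMr // ler_pdivrMr // ![_^-1 * _]mulrC.
by rewrite sqrt_div_le_half_acos ?half_acos_le_sqrt_div.
Qed.

Lemma cvg_inv1D_mul (k : R) : (1 + k * x)^-1 @[x --> (0 : R)^'+] --> (1 : R).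
Proof.
apply: cvg_at_right_filter.
have : (1 + k * x) @[x --> (0 : R)] --> 1 + k * 0.
  by apply: cvgD; [exact: cvg_cst | apply: cvgM; [exact: cvg_cst | exact: cvg_id]].
rewrite mulr0 addr0 => lim1D; rewrite -[X in _ --> X]invr1.
exact: cvgV (oner_neq0 R) lim1D.
Qed.

End Asymptotics.

Lemma Delta_plus_ratio_cvg {R : realType} (M : nat) : (0 < M)%N ->
  Delta_plus M x / (2 * Num.sqrt (M%:R * x)) @[x --> (0:R)^'+] --> (1:R).
Proof.
move=> M_gt0; have M_pos : (0 : R) < M%:R by rewrite ltr0n.
apply: (@squeeze_cvgr _ _ _ _ (fun x => (1 + M%:R * x)^-1) (fun x => (1 + - M%:R * x)^-1));
  last 2 first.
- exact: cvg_inv1D_mul.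
- exact: cvg_inv1D_mul.
near=> x.
have x_gt0 : 0 < x by near: x; exact: nbhs_right_gt.
have x_lt : x < M%:R^-1 by near: x; apply: nbhs_right_lt; rewrite invr_gt0.
rewrite mulNr; apply: acos_expR_ratio_itv.
by rewrite mulr_gt0 //= -ltr_pdivlMl // mulr1.
Unshelve. all: end_near.
Qed.

Lemma Delta_minus_ratioE {R : realType} (omega : R) (M : nat) (x : R) : omega != 0 ->
  Delta_minus omega M x / (2 * Num.sqrt (M%:R * x) / omega) =
  Delta_plus M x / (2 * Num.sqrt (M%:R * x)).
Proof.
move=> omega_neq0; rewrite /Delta_minus /Delta_plus invf_div.
by rewrite -mulrA (mulrCA (acos _)) mulrA -mulrA mulKf.
Qed.

Theorem corollary1 (R : realType) (D N M : nat)
  (a b : 'I_M -> 'I_N) (y : 'I_M -> bool) (omega eps : R)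
  (z : 'I_N -> 'rV[R]_D) :
  (0 < M)%N -> 0 < omega -> 0 < eps ->
  (forall j, z j != 0) ->
  (L_ang omega z a b y <= eps%:E)%E ->
  ((forall i, y i = true ->
      0 <= angle (z (a i)) (z (b i)) <= Delta_plus M eps)
   /\ Delta_plus M x / (2 * Num.sqrt (M%:R * x)) @[x --> (0:R)^'+] --> (1:R))
  /\
  ((forall i, y i = false -> angle (z (a i)) (z (b i)) <= pi / omega ->
      0 <= pi / omega - angle (z (a i)) (z (b i)) <= Delta_minus omega M eps)
   /\ Delta_minus omega M x / (2 * Num.sqrt (M%:R * x) / omega)
        @[x --> (0:R)^'+] --> (1:R)).
Proof.
move=> M_gt0 omega_gt0 eps_gt0 _ L_le.
have prob_ge := expR_le_label_prob M_gt0 L_le.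
have e_itv : 0 <= expR (- (M%:R * eps)) <= 1.
  by rewrite expRN_itv // mulr_ge0 ?ler0n ?ltW.
split; split.
- move=> i yi; have := prob_ge i; rewrite /label_prob yi => prob_ge_i.
  have /andP[-> _] := angle_itv (z (a i)) (z (b i)).
  by rewrite /= /Delta_plus; exact: (angle_le_acos e_itv prob_ge_i).
- exact: Delta_plus_ratio_cvg.
- move=> i yi angle_le; have := prob_ge i; rewrite /label_prob yi => prob_ge_i.
  rewrite subr_ge0 angle_le /Delta_minus.
  exact: (pi_div_sub_angle_le_acos e_itv omega_gt0 angle_le prob_ge_i).
- under eq_fun do rewrite Delta_minus_ratioE ?gt_eqF //.
  exact: Delta_plus_ratio_cvg.
Qed.
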